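(* Let $f:X\to Y$ be a surjective function between topological spaces. Then $f$ is $gSC^*$-closed if and only if for every subset $I\subseteq Y$ and every open set $M\subseteq X$ with $f^{-1}(I)\subseteq M$ there exists a $gSC^*$-open set $N\subseteq Y$ with $I\subseteq N$ and $f^{-1}(N)\subseteq M$. Likewise, $f$ is $SC^*$-$gSC^*$-closed if and only if for every subset $I\subseteq Y$ and every $SC^*$-open set $M\subseteq X$ with $f^{-1}(I)\subseteq M$ there exists a $gSC^*$-open set $N\subseteq Y$ with $I\subseteq N$ and $f^{-1}(N)\subseteq M$.
   Context: For $A\subseteq Z$ in a topological space $Z$: $A$ is semi-open if $A\subseteq cl(int(A))$, semi-closed if its complement is semi-open; $scl(A)$ is the smallest semi-closed set containing $A$. $A$ is $c^*$-open if $int(cl(A))\subseteq A\subseteq cl(int(A))$. $A$ is $SC^*$-closed if $scl(A)\subseteq U$ whenever $A\subseteq U$ and $U$ is $c^*$-open; $A$ is $SC^*$-open if $Z\setminus A$ is $SC^*$-closed. $SC^*\text{-}cl(A)$ is the intersection of all $SC^*$-closed sets containing $A$. $A$ is $gSC^*$-closed if $SC^*\text{-}cl(A)\subseteq U$ whenever $A\subseteq U$ and $U$ is open; $A$ is $gSC^*$-open if its complement is $gSC^*$-closed. $f$ is $gSC^*$-closed if $f(J)$ is $gSC^*$-closed in $Y$ for every closed $J\subseteq X$; $f$ is $SC^*$-$gSC^*$-closed if $f(J)$ is $gSC^*$-closed in $Y$ for every $SC^*$-closed $J\subseteq X$. *)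

From HB Require Import structures.
From mathcomp Require Import all_boot all_order all_algebra.
From mathcomp Require Import all_classical all_reals all_analysis.
Set Implicit Arguments. Unset Strict Implicit. Unset Printing Implicit Defensive.
Local Open Scope classical_set_scope.

Section GSCDefs.
Variable Z : topologicalType.
Implicit Types A U : set Z.

Definition semi_open A : Prop := A `<=` closure (interior A).
Definition semi_closed A : Prop := semi_open (~` A).
Definition scl A : set Z := smallest semi_closed A.
Definition cstar_open A : Prop :=
  interior (closure A) `<=` A /\ A `<=` closure (interior A).
Definition SCstar_closed A : Prop :=
  forall U, A `<=` U -> cstar_open U -> scl A `<=` U.
Definition SCstar_open A : Prop := SCstar_closed (~` A).
Definition SCstar_cl A : set Z := smallest SCstar_closed A.
Definition gSCstar_closed A : Prop :=
  forall U, A `<=` U -> open U -> SCstar_cl A `<=` U.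
Definition gSCstar_open A : Prop := gSCstar_closed (~` A).
End GSCDefs.

Definition gSCstar_closed_map (X Y : topologicalType) (f : X -> Y) : Prop :=
  forall J : set X, closed J -> gSCstar_closed (f @` J).
Definition SCstar_gSCstar_closed_map (X Y : topologicalType) (f : X -> Y) : Prop :=
  forall J : set X, SCstar_closed J -> gSCstar_closed (f @` J).

(* Both equivalences are instances of one set-theoretic fact, valid for any
   class of "closed" sets: for M ⊆ X, the set N := Y \ f(X \ M) is the largest
   set whose preimage lies in M, and conversely f(J) = Y \ N whenever
   Y \ f(J) ⊆ N and f^-1(N) ⊆ X \ J. *)
From mathcomp Require Import all_boot all_classical all_reals all_analysis.
Set Implicit Arguments.
Local Open Scope classical_set_scope.

Section ImageOfComplement.
Variables (X Y : Type) (f : X -> Y).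

Lemma preimage_setC_image_setC (M : set X) : f @^-1` (~` (f @` (~` M))) `<=` M.
Proof. by move=> x /= nfx; apply: contrapT => nMx; apply: nfx; exists x. Qed.

Lemma sub_setC_image_setC (I : set Y) (M : set X) :
  f @^-1` I `<=` M -> I `<=` ~` (f @` (~` M)).
Proof. by move=> sIM y Iy [x nMx fxy]; apply: nMx; apply: sIM; rewrite /= fxy. Qed.

Lemma image_eq_setC (J : set X) (N : set Y) :
  ~` (f @` J) `<=` N -> f @^-1` N `<=` ~` J -> f @` J = ~` N.
Proof.
move=> sfJN sNJ; apply/seteqP; split.
- by move=> _ [x Jx <-] Nfx; exact: sNJ Nfx Jx.
- by move=> y nNy; apply: contrapT => nfJy; exact: nNy (sfJN y nfJy).
Qed.

Lemma image_closed_iff_preimage_nbhs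
    (C O : set X -> Prop) (P : set Y -> Prop) :
  (forall M, O M <-> C (~` M)) ->
  (forall J, C J -> P (f @` J)) <->
  (forall (I : set Y) (M : set X), O M -> f @^-1` I `<=` M ->
     exists N : set Y, P (~` N) /\ I `<=` N /\ f @^-1` N `<=` M).
Proof.
move=> OC; split.
- move=> fC I M /OC CnM sIM; exists (~` (f @` (~` M))); split; last split.
  + by rewrite setCK; exact: fC.
  + exact: sub_setC_image_setC.
  + exact: preimage_setC_image_setC.
- move=> exN J CJ.
  have OnJ : O (~` J) by apply/OC; rewrite setCK.
  have sfJJ : f @^-1` (~` (f @` J)) `<=` ~` J.
    by move=> x /= nfx Jx; apply: nfx; exists x.
  have [N [PnN [sfJN sNJ]]] := exN _ _ OnJ sfJJ.
  by rewrite (image_eq_setC sfJN sNJ).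
Qed.

End ImageOfComplement.

Theorem theorem4p5 (X Y : topologicalType) (f : X -> Y)
  (hsurj : forall y : Y, exists x : X, f x = y) :
  (gSCstar_closed_map f <->
     (forall (I : set Y) (M : set X), open M -> f @^-1` I `<=` M ->
        exists N : set Y, gSCstar_open N /\ I `<=` N /\ f @^-1` N `<=` M)) /\
  (SCstar_gSCstar_closed_map f <->
     (forall (I : set Y) (M : set X), SCstar_open M -> f @^-1` I `<=` M ->
        exists N : set Y, gSCstar_open N /\ I `<=` N /\ f @^-1` N `<=` M)).
Proof.
split; apply: image_closed_iff_preimage_nbhs => M //.
by rewrite closedC.
Qed.
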